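(* Let $\mathbb{X}$ be a Banach space over $\mathbb{R}$ or $\mathbb{C}$ and let $f\in \mathbb{X}^*$. Let $\mathbb{Y}$ be a linear subspace of $\mathbb{X}^{*}$ with $f\notin \mathbb{Y}$, and let $g_0\in \mathbb{Y}$. Then $g_0$ is a best approximation to $f$ out of $\mathbb{Y}$ if and only if for every finite-dimensional subspace $\mathbb{Z}$ of $\mathbb{Y}$ containing $g_0$, $$\Big\|(f-g_0)|_{\bigcap_{g\in \mathbb{Z}}\mathcal{N}(g)}\Big\|=\|f-g_0\|.$$
   Context: $\mathcal{N}(g)=\{x\in\mathbb{X}: g(x)=0\}$. For a closed subspace $\mathcal{W}\subseteq\mathbb{X}$, $\|h|_{\mathcal{W}}\|=\sup\{|h(x)|:x\in\mathcal{W},\|x\|\le 1\}$. $g_0$ is a best approximation to $f$ out of $\mathbb{Y}$ if $\|f-g_0\|=\inf_{g\in\mathbb{Y}}\|f-g\|$. *)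

From HB Require Import structures.
From mathcomp Require Import all_boot all_order all_algebra.
From mathcomp Require Import all_classical all_reals all_analysis.
From mathcomp Require Import complex.
Set Implicit Arguments. Unset Strict Implicit. Unset Printing Implicit Defensive.
Import Order.TTheory GRing.Theory Num.Theory.
Import numFieldNormedType.Exports.
Local Open Scope classical_set_scope.
Local Open Scope ring_scope.

Variant field_kind := RealF | ComplexF.

Definition scal (R : realType) (s : field_kind) : numFieldType :=
  match s with RealF => (R : numFieldType) | ComplexF => (R[i] : numFieldType) end.

(* Real value of a (real-valued) norm stored in the scalar field. *)
Definition toR (R : realType) (s : field_kind) : scal R s -> R :=
  match s return scal R s -> R with
  | RealF => fun x => x
  | ComplexF => fun z => complex.Re z
  end.

Section Dual.
Context (R : realType) (s : field_kind) (V : normedModType (scal R s)).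
Local Notation K := (scal R s).

Definition dual (h : V -> K) : Prop :=
  (forall (a : K) (x y : V), h (a *: x + y) = a * h x + h y) /\ continuous h.

Definition dual_subspace (Y : set (V -> K)) : Prop :=
  Y `<=` dual /\ Y (fun _ => 0) /\
  (forall (a : K) g h, Y g -> Y h -> Y (fun x => a * g x + h x)).

Definition fin_dim_subspace (Z : set (V -> K)) : Prop :=
  exists (n : nat) (b : 'I_n -> V -> K),
    Z = [set (fun x => \sum_(i < n) c i * b i x) | c in [set: 'I_n -> K]].

Definition nullspace (g : V -> K) : set V := [set x | g x = 0].

Definition restr_norm (h : V -> K) (W : set V) : \bar R :=
  ereal_sup [set (toR `|h x|)%:E | x in [set x | W x /\ toR `|x| <= 1]].

Definition dual_norm (h : V -> K) : \bar R := restr_norm h setT.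

Definition best_approx (f g0 : V -> K) (Y : set (V -> K)) : Prop :=
  dual_norm (fun x => f x - g0 x) =
  ereal_inf [set dual_norm (fun x => f x - g x) | g in Y].
End Dual.

From HB Require Import structures.
From mathcomp Require Import all_boot all_order all_algebra.
From mathcomp Require Import all_classical all_reals all_analysis.
From mathcomp Require Import complex.
From mathcomp Require Import ring lra.
Import Order.TTheory GRing.Theory Num.Theory.
Import numFieldNormedType.Exports.
Local Open Scope classical_set_scope.
Local Open Scope ring_scope.
Set Implicit Arguments. Unset Strict Implicit. Unset Printing Implicit Defensive.

(* Let [h := f - g0] and let [Z] be spanned by [b_1, ..., b_n], with common
   kernel [W].  If [M] bounds [h] on [W], a Hahn-Banach extension of [h|_W]
   with bound [M] differs from [h] by a functional vanishing on [W], that is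
   by some [g] in [Z]; so [||f - (g0 + g)|| <= M], and the minimality of [g0]
   gives [||h|| <= M].  Conversely, for [g] in [Y], [f - g0] and [f - g] agree
   on the common kernel [W] of [g0] and [g], so that
   [||f - g0|| = ||(f - g0)|_W|| <= ||f - g||].
   The extension is built one [b_i] at a time, by the one-dimensional
   Hahn-Banach step applied to real parts (twice over C, in the directions
   [x0] and [i x0]), and a rotation [z |-> w z] with [|w| = 1] turns the
   bound on the real part into a bound on the modulus. *)

Section Scalars.
Variables (R : realType) (s : field_kind).
Local Notation K := (scal R s).
Local Notation toR := (@toR R s).

Definition ofR : {rmorphism R -> K} :=
  match s return {rmorphism R -> scal R s} with
  | RealF => idfun
  | ComplexF => real_complex R
  end.

(* In the real case [iK] and [imK] are both 0, so that [scal_decomp] below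
   holds uniformly in [s]. *)
Definition iK : K := match s return scal R s with RealF => 0 | ComplexF => 'i%C end.

Definition imK : K -> R :=
  match s return scal R s -> R with
  | RealF => fun=> 0
  | ComplexF => fun z => complex.Im z
  end.

Lemma toRD (a b : K) : toR (a + b) = toR a + toR b.
Proof. by move: a b; case: s => // -[? ?] [? ?]. Qed.

Lemma toRN (a : K) : toR (- a) = - toR a.
Proof. by move: a; case: s => // -[? ?]. Qed.

Lemma imKD (a b : K) : imK (a + b) = imK a + imK b.
Proof. by move: a b; rewrite /imK; case: s => [? ?|[? ?] [? ?]] //=; rewrite addr0. Qed.

Lemma toR0 : toR 0 = 0.
Proof. by case: s. Qed.

Lemma le_toR (a b : K) : a <= b -> toR a <= toR b.
Proof. by move: a b; case: s => //= a b; rewrite lecE => /andP[]. Qed.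

Lemma toR_ofRM (r : R) (z : K) : toR (ofR r * z) = r * toR z.
Proof. by move: z; rewrite /ofR; case: s => //= -[? ?] /=; rewrite mul0r subr0. Qed.

Lemma imK_ofRM (r : R) (z : K) : imK (ofR r * z) = r * imK z.
Proof.
by move: z; rewrite /imK /ofR; case: s => [?|[? ?]] /=; rewrite ?mulr0 // mul0r addr0.
Qed.

Lemma toR_iKM (z : K) : toR (iK * z) = - imK z.
Proof.
move: z; rewrite /iK /imK; case: s => [?|[? ?]] /=; first by rewrite mul0r oppr0.
by rewrite mul0r mul1r sub0r.
Qed.

Lemma toR_iK : toR iK = 0.
Proof. by rewrite /iK; case: s. Qed.

Lemma toR_ofR (r : R) : toR (ofR r) = r.
Proof. by rewrite /ofR; case: s. Qed.

Lemma imK_ofR (r : R) : imK (ofR r) = 0.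
Proof. by rewrite /imK /ofR; case: s. Qed.

Lemma scal_decomp (z : K) : z = ofR (toR z) + ofR (imK z) * iK.
Proof.
move: z; rewrite /iK /imK /ofR; case: s => [z|[a b]] /=; first by rewrite mulr0 addr0.
by apply/eqP; rewrite eq_complex /= !mul0r !mulr0 !mulr1 ?subr0 ?addr0 ?add0r ?eqxx.
Qed.

Lemma ofR_toR (z : K) : imK z = 0 -> ofR (toR z) = z.
Proof. by move=> z0; rewrite {2}(scal_decomp z) z0 rmorph0 mul0r addr0. Qed.

Lemma imK_ge0 (a : K) : 0 <= a -> imK a = 0.
Proof. by move: a; rewrite /imK; case: s => // a /ger0_Im. Qed.

End Scalars.

Section RealNorm.
Variables (R : realType) (s : field_kind).
Local Notation K := (scal R s).
Local Notation toR := (@toR R s).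
Local Notation ofR := (@ofR R s).

Definition rnorm (V : normedZmodType K) (x : V) : R := toR `|x|.

Lemma rnorm_ge0 (V : normedZmodType K) (x : V) : 0 <= rnorm x.
Proof. by rewrite -(@toR0 R s); apply/le_toR. Qed.

Lemma rnormD (V : normedZmodType K) (x y : V) : rnorm (x + y) <= rnorm x + rnorm y.
Proof. by rewrite /rnorm -toRD; apply/le_toR/ler_normD. Qed.

Lemma ofR_rnorm (V : normedZmodType K) (x : V) : ofR (rnorm x) = `|x|.
Proof. exact/ofR_toR/imK_ge0. Qed.

Lemma rnorm_eq0 (V : normedZmodType K) (x : V) : (rnorm x == 0) = (x == 0).
Proof. by rewrite -[x == 0]normr_eq0 -(ofR_rnorm x) fmorph_eq0. Qed.

Lemma rnormZ (X : normedModType K) (a : K) (x : X) :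
  rnorm (a *: x) = rnorm a * rnorm x.
Proof. by rewrite {1}/rnorm normrZ -ofR_rnorm toR_ofRM. Qed.

Lemma rnorm_ofR (r : R) : rnorm (ofR r) = `|r|.
Proof. by rewrite /rnorm /ofR; case: s => //=; rewrite expr0n /= addr0 sqrtr_sqr. Qed.

Lemma toR_le_rnorm (z : K) : toR z <= rnorm z.
Proof.
rewrite /rnorm; move: z; case: s => /= [z|[a b]]; first exact: ler_norm.
apply: (le_trans (ler_norm a)); rewrite -sqrtr_sqr.
by apply: ler_wsqrtr; rewrite lerDl sqr_ge0.
Qed.

Lemma rotate_to_rnorm (z : K) : exists w : K, rnorm w = 1 /\ toR (w * z) = rnorm z.
Proof.
have [->|z0] := eqVneq z 0.
  by exists 1; rewrite /rnorm normr1 mulr0 normr0; case: s.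
exists (`|z| / z); split; last by rewrite mulfVK.
by rewrite /rnorm normf_div normr_id divff ?normr_eq0 //; case: s.
Qed.
End RealNorm.

Section Functionals.
Variables (R : realType) (s : field_kind) (X : normedModType (scal R s)).
Local Notation K := (scal R s).
Local Notation toR := (@toR R s).
Local Notation ofR := (@ofR R s).
Local Notation imK := (@imK R s).
Implicit Types (h k : X -> K) (V : set X).

Lemma scalar0 h : scalar h -> h 0 = 0.
Proof. by move=> lh; have := zmod_morphism_linear lh 0 0; rewrite !subrr. Qed.

Lemma scalarB h : scalar h -> {morph h : x y / x - y}.
Proof. exact: zmod_morphism_linear. Qed.

Lemma scalarZ h : scalar h -> forall a x, h (a *: x) = a * h x.
Proof. exact: scalable_linear. Qed.

Lemma scalar_sub h k : scalar h -> scalar k -> scalar (fun x => h x - k x).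
Proof. by move=> lh lk a x y; rewrite lh lk; ring. Qed.

Lemma scalar_comb n (c : 'I_n -> K) (b : 'I_n -> X -> K) :
  (forall i, scalar (b i)) -> scalar (fun x => \sum_(i < n) c i * b i x).
Proof.
move=> lb a x y; rewrite mulr_sumr -big_split; apply: eq_bigr => i _.
by rewrite lb mulrDr mulrCA.
Qed.

Definition re_linear (phi : X -> R) :=
  forall r x y, phi (ofR r *: x + y) = r * phi x + phi y.

Lemma re_linearD phi : re_linear phi -> {morph phi : x y / x + y}.
Proof. by move=> lphi x y; have := lphi 1 x y; rewrite rmorph1 scale1r mul1r. Qed.

Lemma re_linearZ phi : re_linear phi -> forall r x, phi (ofR r *: x) = r * phi x.
Proof.
move=> lphi r x; have phi0 : phi 0 = 0.
  by apply/(addrI (phi 0)); rewrite -re_linearD // !addr0.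
by rewrite -[ofR r *: x]addr0 lphi phi0 addr0.
Qed.

Lemma re_linear_toR h : scalar h -> re_linear (toR \o h).
Proof. by move=> lh r x y /=; rewrite lh toRD toR_ofRM. Qed.

Lemma re_linear_imK h : scalar h -> re_linear (imK \o h).
Proof. by move=> lh r x y /=; rewrite lh imKD imK_ofRM. Qed.

Definition re_subspace V := V 0 /\ forall r x y, V x -> V y -> V (ofR r *: x + y).

Definition lin_subspace V := V 0 /\ forall (a : K) x y, V x -> V y -> V (a *: x + y).

Lemma lin_subspaceZ V a x : lin_subspace V -> V x -> V (a *: x).
Proof. by move=> [V0 VV] Vx; rewrite -[_ *: x]addr0; apply: VV. Qed.

Lemma lin_subspaceI_ker V h : lin_subspace V -> scalar h ->
  lin_subspace (V `&` [set x | h x = 0]).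
Proof.
move=> [V0 VV] lh; split; first by split=> //=; rewrite scalar0.
by move=> a x y [Vx hx] [Vy hy]; split; [apply: VV | rewrite /= lh hx hy mulr0 addr0].
Qed.

Lemma re_subspace_lin V : lin_subspace V -> re_subspace V.
Proof. by move=> [V0 VV]; split=> // r; apply: VV. Qed.

Lemma re_subspaceI_ker V (beta : X -> R) : re_subspace V -> re_linear beta ->
  re_subspace (V `&` [set x | beta x = 0]).
Proof.
move=> [V0 VV] lbeta; split.
  by split=> //=; rewrite -(scale0r 0) -(rmorph0 ofR) re_linearZ // mul0r.
move=> r x y [Vx bx] [Vy By]; split; first exact: VV.
by rewrite /= lbeta bx By mulr0 addr0.
Qed.
End Functionals.

Lemma exists_between (R : realType) (T : Type) (U : set T) (lo hi : T -> R) :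
  U !=set0 -> (forall u v, U u -> U v -> lo u <= hi v) ->
  exists a, forall u, U u -> lo u <= a <= hi u.
Proof.
move=> [u0 Uu0] lohi; exists (sup (lo @` U)) => u Uu; apply/andP; split.
  by apply: ub_le_sup; [exists (hi u0) => _ [v Uv <-]; apply: lohi | exists u].
by apply: ge_sup; [exists (lo u0), u0 | move=> _ [v Uv <-]; apply: lohi].
Qed.

Section Sublinear.
Variables (R : realType) (s : field_kind) (X : normedModType (scal R s)).
Local Notation K := (scal R s).
Local Notation toR := (@toR R s).
Local Notation ofR := (@ofR R s).
Local Notation imK := (@imK R s).
Local Notation iK := (@iK R s).
Variable p : X -> R.
Hypothesis pD : forall x y, p (x + y) <= p x + p y.
Hypothesis pZ : forall r x, 0 < r -> p (ofR r *: x) = r * p x.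

Lemma hahn_banach_step (U : set X) (phi : X -> R) (w : X) :
  re_subspace U -> re_linear phi -> (forall u, U u -> phi u <= p u) ->
  exists a, forall u t, U u -> phi u + t * a <= p (u + ofR t *: w).
Proof.
move=> [U0 UU] lphi phip.
have UZ r u : U u -> U (ofR r *: u) by move=> Uu; rewrite -[_ *: u]addr0; apply: UU.
have [a Ha] : exists a, forall u, U u -> phi u - p (u - w) <= a <= p (u + w) - phi u.
  apply: exists_between; first by exists 0.
  move=> u v Uu Uv; have := phip _ (UU 1 _ _ Uu Uv).
  rewrite rmorph1 scale1r (re_linearD lphi) => le_uv.
  have := pD (u - w) (v + w); rewrite addrACA addNr addr0; lra.
exists a => u t Uu; have [t_lt0|t_gt0|->] := ltgtP t 0; last first.
- by rewrite mul0r addr0 rmorph0 scale0r addr0; apply: phip.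
- pose v := ofR t^-1 *: u.
  have ->: u + ofR t *: w = ofR t *: (v + w).
    by rewrite scalerDr scalerA -rmorphM divff ?gt_eqF // rmorph1 scale1r.
  have ->: phi u = t * phi v by rewrite (re_linearZ lphi) mulrA divff ?gt_eqF // mul1r.
  rewrite pZ //; have /andP[_] := Ha v (UZ _ _ Uu); nra.
- pose v := ofR (- t)^-1 *: u.
  have ->: u + ofR t *: w = ofR (- t) *: (v - w).
    rewrite scalerBr scalerA -rmorphM divff ?oppr_eq0 ?lt_eqF // rmorph1 scale1r.
    by rewrite rmorphN scaleNr opprK.
  have ->: phi u = - t * phi v.
    by rewrite (re_linearZ lphi) mulrA divff ?oppr_eq0 ?lt_eqF // mul1r.
  rewrite pZ ?oppr_gt0 //; have /andP[+ _] := Ha v (UZ _ _ Uu); nra.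
Qed.

Lemma re_extend (V : set X) (beta phi : X -> R) (w : X) :
  re_subspace V -> re_linear beta -> re_linear phi -> V w ->
  (forall x, V x -> beta (x - ofR (beta x) *: w) = 0) ->
  (forall x, V x -> beta x = 0 -> phi x <= p x) ->
  exists a, forall x, V x -> phi (x - ofR (beta x) *: w) + beta x * a <= p x.
Proof.
move=> sV lbeta lphi Vw proj phip.
have [a Ha] := hahn_banach_step w (re_subspaceI_ker sV lbeta) lphi
  (fun u '(conj Vu bu) => phip u Vu bu).
exists a => x Vx; have := Ha (x - ofR (beta x) *: w) (beta x); rewrite subrK; apply.
split; last exact: proj.
by case: sV => _ VV; rewrite addrC -scaleNr -rmorphN; apply: VV.
Qed.

Lemma exists_re_dominated_on_real_slice (V : set X) (k b : X -> K) (x0 : X) :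
  lin_subspace V -> scalar k -> scalar b -> V x0 -> b x0 = 1 ->
  (forall x, V x -> b x = 0 -> toR (k x) <= p x) ->
  exists a, forall x, V x -> imK (b x) = 0 ->
    toR (k x - b x * k x0) + toR (b x) * a <= p x.
Proof.
move=> sV lk lb Vx0 bx0 kp.
have [||||||a Ha] := re_extend (V := V `&` [set x | imK (b x) = 0])
  (beta := toR \o b) (phi := toR \o k) (w := x0).
- exact: re_subspaceI_ker (re_subspace_lin sV) (re_linear_imK lb).
- exact: re_linear_toR.
- exact: re_linear_toR.
- by split=> //=; rewrite bx0 -(rmorph1 ofR) imK_ofR.
- move=> x _ /=; rewrite (scalarB lb) (scalarZ lb) bx0 mulr1.
  by rewrite toRD toRN toR_ofR subrr.
- move=> x [Vx bx] /= bx'; apply: kp => //.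
  by rewrite (scal_decomp (b x)) bx bx' rmorph0 mul0r addr0.
exists a => x Vx bx; have := Ha x (conj Vx bx).
by rewrite /= ofR_toR // (scalarB lk) (scalarZ lk).
Qed.

Lemma exists_re_dominated_correction1 (V : set X) (k b : X -> K) :
  lin_subspace V -> scalar k -> scalar b ->
  (forall x, V x -> b x = 0 -> toR (k x) <= p x) ->
  exists c, forall x, V x -> toR (k x - c * b x) <= p x.
Proof.
move=> sV lk lb kp.
have [[x1 Vx1 bx1]|b0] := pselect (exists2 x1, V x1 & b x1 != 0); last first.
  exists 0 => x Vx; rewrite mul0r subr0; apply: kp => //.
  by apply: contra_notP b0 => /eqP; exists x.
have [x0 Vx0 bx0] : exists2 x0, V x0 & b x0 = 1.
  by exists ((b x1)^-1 *: x1); [exact: lin_subspaceZ | rewrite (scalarZ lb) mulVf].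
have [a1 Ha1] := exists_re_dominated_on_real_slice sV lk lb Vx0 bx0 kp.
pose phi1 x := toR (k x - b x * k x0) + toR (b x) * a1.
have lphi1 : re_linear phi1.
  have lg : scalar (fun x => k x - b x * k x0).
    by move=> c x y; rewrite lk lb mulrDl -mulrA opprD addrACA -mulrBr.
  move=> r x y; rewrite /phi1.
  by have /= -> := re_linear_toR lg r x y; have /= -> := re_linear_toR lb r x y; ring.
have [|||a2 Ha2] := re_extend (V := V) (beta := imK \o b) (phi := phi1)
  (w := iK *: x0) (re_subspace_lin sV) (re_linear_imK lb) lphi1.
- exact: lin_subspaceZ.
- move=> x Vx /=; rewrite (scalarB lb) !(scalarZ lb) bx0 mulr1.
  by rewrite {1}(scal_decomp (b x)) addrK imK_ofR.
- exact: Ha1.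
(* The extension takes the values [a1] at [x0] and [a2] at [iK *: x0]: it is
   the real part of [k - c * b] for the [c] below. *)
exists (k x0 - ofR a1 + iK * ofR a2) => x Vx; have := Ha2 x Vx.
rewrite /= /phi1 (scalarB lk) (scalarB lb) !(scalarZ lk) !(scalarZ lb) bx0 mulr1.
have -> : k x - ofR (imK (b x)) * (iK * k x0) - (b x - ofR (imK (b x)) * iK) * k x0 =
    k x - b x * k x0.
  by move: (ofR _) => c; ring.
have -> : k x - (k x0 - ofR a1 + iK * ofR a2) * b x =
    (k x - b x * k x0) + ofR a1 * b x - iK * (ofR a2 * b x).
  by move: (ofR a1) (ofR a2) => c1 c2; ring.
by rewrite !toRD !toRN !toR_ofRM toR_iK toR_iKM imK_ofRM; lra.
Qed.

Lemma exists_re_dominated_correction n (V : set X) (h : X -> K) (b : 'I_n -> X -> K) :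
  lin_subspace V -> scalar h -> (forall i, scalar (b i)) ->
  (forall x, V x -> (forall i, b i x = 0) -> toR (h x) <= p x) ->
  exists c : 'I_n -> K, forall x, V x -> toR (h x - \sum_(i < n) c i * b i x) <= p x.
Proof.
elim: n V h b => [|n IH] V h b sV lh lb hp.
  by exists (fun=> 0) => x Vx; rewrite big_ord0 subr0; apply: hp => //; case.
pose b' i := b (lift ord0 i).
have [|c' Hc'] := IH (V `&` [set x | b ord0 x = 0]) h b'
  (lin_subspaceI_ker sV (lb ord0)) lh (fun i => lb _).
  move=> x [Vx bx] hb; apply: hp => // i.
  by case: (unliftP ord0 i) => [j ->|->]; [exact: hb | exact: bx].
have [c0 Hc0] := exists_re_dominated_correction1 sV
  (scalar_sub lh (scalar_comb c' (fun i => lb _))) (lb ord0)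
  (fun x Vx bx => Hc' x (conj Vx bx)).
exists (fun i => if unlift ord0 i is Some j then c' j else c0) => x Vx.
rewrite big_ord_recl unlift_none; under eq_bigr => j _ do rewrite liftK.
by rewrite opprD addrA addrAC; apply: Hc0.
Qed.
End Sublinear.

Section Duality.
Variables (R : realType) (s : field_kind) (X : normedModType (scal R s)).
Local Notation K := (scal R s).
Local Notation toR := (@toR R s).
Local Notation ofR := (@ofR R s).

Definition common_kernel n (b : 'I_n -> X -> K) : set X :=
  [set x | forall i, b i x = 0].

Lemma rnorm_le_of_toR_le (g : X -> K) (M : R) : scalar g ->
  (forall x, toR (g x) <= M * rnorm x) -> forall x, rnorm (g x) <= M * rnorm x.
Proof.
move=> lg gM x; have [w [w1 <-]] := rotate_to_rnorm (g x).
by rewrite -(scalarZ lg); apply: le_trans (gM _) _; rewrite rnormZ w1 mul1r.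
Qed.

Lemma le_restr_norm (h : X -> K) (W W' : set X) :
  W `<=` W' -> (restr_norm h W <= restr_norm h W')%E.
Proof. by move=> sW; apply/ereal_sup_le/image_subset => x [/sW]. Qed.

Lemma eq_restr_norm (h h' : X -> K) (W : set X) :
  (forall x, W x -> h x = h' x) -> restr_norm h W = restr_norm h' W.
Proof.
move=> hh'; rewrite /restr_norm; congr ereal_sup.
by apply/seteqP; split=> _ [x [Wx x1] <-]; exists x; rewrite ?hh'.
Qed.

Lemma restr_norm_le (h : X -> K) (W : set X) (M : R) : 0 <= M ->
  (forall x, W x -> rnorm (h x) <= M * rnorm x) -> (restr_norm h W <= M%:E)%E.
Proof.
move=> M0 hM; apply: ge_ereal_sup => _ [x [Wx x1] <-]; rewrite lee_fin.
by apply: le_trans (hM x Wx) _; rewrite -[leRHS]mulr1 ler_wpM2l.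
Qed.

Lemma restr_norm_ge0 (h : X -> K) (W : set X) : scalar h -> W 0 ->
  (0 <= restr_norm h W)%E.
Proof.
move=> lh W0; apply: ereal_sup_ubound; exists 0; first by split=> //; rewrite normr0 toR0.
by rewrite (scalar0 lh) normr0 toR0.
Qed.

Lemma restr_norm_dominated (h : X -> K) (W : set X) (M : R) : scalar h ->
  (forall a x, W x -> W (a *: x)) -> restr_norm h W = M%:E ->
  forall x, W x -> rnorm (h x) <= M * rnorm x.
Proof.
move=> lh WZ hW x Wx; have [->|x_neq0] := eqVneq x 0.
  by rewrite (scalar0 lh) /rnorm !normr0 toR0 mulr0.
have nx_gt0 : 0 < rnorm x by rewrite lt_neqAle rnorm_ge0 eq_sym rnorm_eq0 x_neq0.
pose y := ofR (rnorm x)^-1 *: x.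
have : ((rnorm (h y))%:E <= M%:E)%E.
  rewrite -hW; apply: ereal_sup_ubound; exists y => //; split; first exact: WZ.
  rewrite -[toR _]/(rnorm y) rnormZ rnorm_ofR ger0_norm ?invr_ge0 ?rnorm_ge0 //.
  by rewrite mulVf ?gt_eqF.
rewrite lee_fin /y (scalarZ lh) rnormZ rnorm_ofR ger0_norm ?invr_ge0 ?rnorm_ge0 //.
by rewrite mulrC ler_pdivrMr.
Qed.

Lemma dist_span_le_restr_norm n (h : X -> K) (b : 'I_n -> X -> K) :
  scalar h -> (forall i, scalar (b i)) ->
  exists c : 'I_n -> K,
    (dual_norm (fun x => (h x - \sum_(i < n) c i * b i x)%R)
     <= restr_norm h (common_kernel b))%E.
Proof.
move=> lh lb; set W := common_kernel b.
have W0 : W 0 by move=> i; rewrite (scalar0 (lb i)).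
have WZ a x : W x -> W (a *: x) by move=> Wx i; rewrite (scalarZ (lb i)) Wx mulr0.
case E: (restr_norm h W) (restr_norm_ge0 lh W0) => [M| |] // M0; last first.
  by exists (fun=> 0); rewrite leey.
rewrite lee_fin in M0; have hM := restr_norm_dominated lh WZ E.
have pD (x y : X) : M * rnorm (x + y) <= M * rnorm x + M * rnorm y.
  by rewrite -mulrDr ler_wpM2l ?rnormD.
have pZ r (x : X) : 0 < r -> M * rnorm (ofR r *: x) = r * (M * rnorm x).
  by move=> r_gt0; rewrite rnormZ rnorm_ofR gtr0_norm // mulrCA.
have [c Hc] := exists_re_dominated_correction pD pZ (V := setT)
  (conj I (fun _ _ _ _ _ => I)) lh lb
  (fun x _ Wx => le_trans (toR_le_rnorm _) (hM x Wx)).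
exists c; apply: restr_norm_le => // x _.
exact: rnorm_le_of_toR_le (scalar_sub lh (scalar_comb c lb)) (fun x => Hc x I) x.
Qed.
End Duality.

Section Span.
Variables (R : realType) (s : field_kind) (X : normedModType (scal R s)).
Local Notation K := (scal R s).

Definition lin_span n (b : 'I_n -> X -> K) : set (X -> K) :=
  [set (fun x => \sum_(i < n) c i * b i x) | c in [set: 'I_n -> K]].

Lemma lin_span_fin_dim n (b : 'I_n -> X -> K) : fin_dim_subspace (lin_span b).
Proof. by exists n, b. Qed.

Lemma lin_span_mem n (b : 'I_n -> X -> K) i : lin_span b (b i).
Proof.
exists (fun j => (j == i)%:R) => //; apply: funext => x.
rewrite (bigD1 i) //= eqxx mul1r big1 ?addr0 // => j /negbTE ->.
by rewrite mul0r.
Qed.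

Lemma lin_span_sub (Y : set (X -> K)) n (b : 'I_n -> X -> K) :
  dual_subspace Y -> (forall i, Y (b i)) -> lin_span b `<=` Y.
Proof.
move=> [_ [Y0 YY]] + _ [c _ <-]; elim: n b c => [|n IH] b c Yb.
  by rewrite (_ : (fun x => _) = fun=> 0) //; apply: funext => x; rewrite big_ord0.
rewrite (_ : (fun x => _) = fun x => c ord0 * b ord0 x +
  \sum_(i < n) c (lift ord0 i) * b (lift ord0 i) x); last first.
  by apply: funext => x; rewrite big_ord_recl.
by apply: YY; [exact: Yb | apply: IH => i].
Qed.

Lemma bigcap_nullspace_span n (b : 'I_n -> X -> K) :
  \bigcap_(g in lin_span b) nullspace g = common_kernel b.
Proof.
apply/seteqP; split=> x; first by move=> Wx i; apply: Wx; exact: lin_span_mem.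
by move=> bx _ [c _ <-]; rewrite /nullspace /= big1 // => i _; rewrite bx mulr0.
Qed.

Lemma best_approxP (f g0 : X -> K) (Y : set (X -> K)) : Y g0 ->
  best_approx f g0 Y <->
  (forall g, Y g -> (dual_norm (fun x => (f x - g0 x)%R)
                     <= dual_norm (fun x => (f x - g x)%R))%E).
Proof.
move=> Yg0; rewrite /best_approx; split=> [-> g Yg | H].
  by apply: ereal_inf_lbound; exists g.
apply/le_anti/andP; split; last by apply: ereal_inf_lbound; exists g0.
by apply/ereal_infP => _ [g Yg <-]; apply: H.
Qed.
End Span.

Theorem theorem4p8 (R : realType) (s : field_kind)
  (X : completeNormedModType (scal R s))
  (f : X -> scal R s) (Y : set (X -> scal R s)) (g0 : X -> scal R s) :
  dual f -> dual_subspace Y -> ~ Y f -> Y g0 ->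
  (best_approx f g0 Y <->
   (forall Z : set (X -> scal R s),
      fin_dim_subspace Z -> Z `<=` Y -> Z g0 ->
      restr_norm (fun x => f x - g0 x) (\bigcap_(g in Z) nullspace g)
      = dual_norm (fun x => f x - g0 x))).
Proof.
move=> [lf _] sY _ Yg0; have lY g : Y g -> scalar g by move=> /sY.1 [].
have lh : scalar (fun x => f x - g0 x) := scalar_sub lf (lY _ Yg0).
rewrite best_approxP //; split=> [best _ [n [b ->]] Zsub _ | H g Yg].
- have Yb i : Y (b i) := Zsub _ (lin_span_mem b i).
  rewrite bigcap_nullspace_span; apply/le_anti/andP; split.
    exact: le_restr_norm.
  have [c Hc] := dist_span_le_restr_norm lh (fun i => lY _ (Yb i)).
  pose g x := 1 * \sum_(i < n) c i * b i x + g0 x.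
  have Yg : Y g by apply: sY.2.2 => //; apply: lin_span_sub sY Yb _ _; exists c.
  apply: le_trans (best g Yg) _; rewrite (_ : (fun x => f x - g x) =
    fun x => f x - g0 x - \sum_(i < n) c i * b i x) //.
  by apply: funext => x; rewrite /g mul1r opprD addrA addrAC.
- pose b (i : 'I_2) := if i == ord0 then g0 else g.
  have Yb i : Y (b i) by rewrite /b; case: ifP.
  rewrite -(H (lin_span b)) ?bigcap_nullspace_span; first last.
  + exact: lin_span_mem ord0.
  + exact: lin_span_sub.
  + exact: lin_span_fin_dim.
  rewrite (@eq_restr_norm _ _ _ _ (fun x => f x - g x)); first exact: le_restr_norm.
  by move=> x bx; move: (bx ord0) (bx (lift ord0 ord0)); rewrite /b /= => -> ->.
Qed.
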